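(* Let $(X,D)$ be an $\mathcal{F}$-metric space with respect to $(f,\alpha)\in\mathcal{F}\times[0,\infty)$. Then for every $a\in X$ and every $k>0$ there exists $r>0$ such that for all $b\in X$ with $D(a,b)\ge k$ and all $c\in X$, one has $D(a,c)+D(b,c)\ge r$.
   Context: $\mathcal{F}$ denotes the class of functions $f:(0,\infty)\to\mathbb{R}$ such that ($\mathcal{F}_1$) $f$ is non-decreasing, and ($\mathcal{F}_2$) for every sequence $(t_n)\subseteq(0,\infty)$, $\lim_n t_n=0$ iff $\lim_n f(t_n)=-\infty$. An $\mathcal{F}$-metric on a non-empty set $X$ is a map $D:X\times X\to[0,\infty)$ for which there exists $(f,\alpha)\in\mathcal{F}\times[0,\infty)$ such that: (D1) $D(x,y)=0$ iff $x=y$; (D2) $D(x,y)=D(y,x)$ for all $x,y$; (D3) for all $(x,y)\in X\times X$, every integer $N\ge2$ and every $u_1,\dots,u_N\in X$ with $u_1=x$, $u_N=y$: if $D(x,y)>0$ then $f(D(x,y))\le f\big(\sum_{i=1}^{N-1}D(u_i,u_{i+1})\big)+\alpha$. *)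

From Stdlib Require Import Reals List.
Open Scope R_scope.

(* f : (0,oo) -> R is modelled as a total function R -> R whose values
   outside (0,oo) are irrelevant: all conditions only refer to positive
   arguments. *)
Definition F_class (f : R -> R) : Prop :=
  (forall s t, 0 < s -> s < t -> f s <= f t) /\
  (forall t : nat -> R, (forall n, 0 < t n) ->
     (Un_cv t 0 <-> cv_infty (fun n => - f (t n)))).

Fixpoint chain_sum {X : Type} (D : X -> X -> R) (x : X) (l : list X) : R :=
  match l with
  | nil => 0
  | y :: l' => D x y + chain_sum D y l'
  end.

(* D is an F-metric on X w.r.t. (f, alpha). A chain u_1 = x, ..., u_N = y
   with N >= 2 is represented as x :: mid ++ [y]. *)
Definition is_F_metric {X : Type} (D : X -> X -> R) (f : R -> R) (alpha : R)
  : Prop :=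
  F_class f /\ 0 <= alpha /\
  (forall x y, 0 <= D x y) /\
  (forall x y, D x y = 0 <-> x = y) /\
  (forall x y, D x y = D y x) /\
  (forall x y (mid : list X), 0 < D x y ->
     f (D x y) <= f (chain_sum D x (mid ++ y :: nil)) + alpha).

From Stdlib Require Import Reals List Lra Lia Classical IndefiniteDescription.
Open Scope R_scope.

(* Axiom (F2) says that f tends to -oo at 0+; turning it from a
   statement about sequences into an epsilon-delta statement gives, for the
   level M := f k - alpha, a radius delta > 0 with f t < M on (0, delta).
   We take r := delta.  If D a b >= k and t := D a c + D b c were below delta,
   then t > 0 (otherwise a = c = b and D a b = 0), and the triangle-type axiom
   (D3) along the chain a, c, b together with monotonicity (F1) gives
     f k <= f (D a b) <= f t + alpha < f k,
   a contradiction. *)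

Lemma Un_cv_0_of_le_inv_succ (t : nat -> R) :
  (forall n, 0 < t n <= / INR (S n)) -> Un_cv t 0.
Proof.
  intros Ht eps Heps.
  destruct (archimed_cor1 eps Heps) as [N [HN HNpos]].
  exists N; intros n Hn.
  unfold Rdist; rewrite Rminus_0_r.
  destruct (Ht n) as [Htpos Htle].
  rewrite Rabs_pos_eq by lra.
  assert (Hinv : / INR (S n) <= / INR N).
  { apply Rinv_le_contravar; [apply lt_0_INR; lia | apply le_INR; lia]. }
  lra.
Qed.

Lemma F_class_below_near_0 (f : R -> R) :
  F_class f -> forall M : R, exists delta, 0 < delta /\
    forall t, 0 < t < delta -> f t < M.
Proof.
  intros [_ Hlim] M.
  apply NNPP; intro Hnot.
  assert (Hbad : forall n : nat, exists t, 0 < t <= / INR (S n) /\ M <= f t).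
  { intro n; apply NNPP; intro Hn; apply Hnot.
    exists (/ INR (S n)); split.
    - apply Rinv_0_lt_compat, lt_0_INR; lia.
    - intros t Ht; apply Rnot_le_lt; intro HM.
      apply Hn; exists t; split; [lra | exact HM]. }
  destruct (functional_choice _ Hbad) as [t Ht].
  assert (Htpos : forall n, 0 < t n) by (intro n; apply (Ht n)).
  assert (Hcv : Un_cv t 0) by (apply Un_cv_0_of_le_inv_succ; intro n; apply Ht).
  destruct (proj1 (Hlim t Htpos) Hcv (- M)) as [N HN].
  specialize (HN N (le_n N)); simpl in HN.
  destruct (Ht N) as [_ HfM]; lra.
Qed.

Section FMetric.

Variables (X : Type) (D : X -> X -> R) (f : R -> R) (alpha : R).
Hypothesis HD : is_F_metric D f alpha.

Lemma F_metric_detour_pos (x y z : X) :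
  0 < D x y -> 0 < D x z + D z y.
Proof.
  destruct HD as [_ [_ [Hnn [Hzero _]]]].
  intros Hxy.
  pose proof (Hnn x z); pose proof (Hnn z y).
  destruct (Req_dec (D x z) 0) as [Hxz | Hxz]; [| lra].
  destruct (Req_dec (D z y) 0) as [Hzy | Hzy]; [| lra].
  apply Hzero in Hxz; apply Hzero in Hzy; subst z y.
  rewrite (proj2 (Hzero x x) eq_refl) in Hxy; lra.
Qed.

Lemma F_metric_two_step (x y z : X) :
  0 < D x y -> f (D x y) <= f (D x z + D z y) + alpha.
Proof.
  destruct HD as [_ [_ [_ [_ [_ Hchain]]]]].
  intros Hxy.
  pose proof (Hchain x y (z :: nil) Hxy) as H; simpl in H.
  rewrite Rplus_0_r in H; exact H.
Qed.

End FMetric.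

Theorem mainTheorem5 (X : Type) (D : X -> X -> R) (f : R -> R) (alpha : R)
  (HD : is_F_metric D f alpha) :
  forall (a : X) (k : R), 0 < k ->
    exists r : R, 0 < r /\
      forall b c : X, D a b >= k -> D a c + D b c >= r.
Proof.
  intros a k Hk.
  pose proof HD as [[Hmono _] [_ [_ [_ [Hsym _]]]]].
  destruct (F_class_below_near_0 f (proj1 HD) (f k - alpha))
    as [delta [Hdelta Hbelow]].
  exists delta; split; [exact Hdelta |].
  intros b c Hab; apply Rnot_lt_ge; intro Hsmall.
  rewrite (Hsym b c) in Hsmall.
  assert (Hpos : 0 < D a b) by lra.
  pose proof (F_metric_detour_pos X D f alpha HD a b c Hpos) as Ht.
  pose proof (F_metric_two_step X D f alpha HD a b c Hpos) as Hchain.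
  assert (Hfk : f k <= f (D a b)).
  { destruct (Rge_gt_or_eq_dec _ _ Hab) as [Hgt | Heq];
      [apply Hmono; lra | rewrite Heq; lra]. }
  specialize (Hbelow (D a c + D c b) (conj Ht Hsmall)).
  lra.
Qed.
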